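(* Let $\Lambda$ be a $\sigma$-finite measure on $\mathcal Y\subseteq\mathbb R$, let $\gamma\in\mathbb R\setminus\{0,-1\}$, let $Q_1,\dots,Q_k$ be probability measures on $\mathcal Y$ mutually absolutely continuous with $\Lambda$ with densities $q_j=\mathrm dQ_j/\mathrm d\Lambda$, and let $w_1,\dots,w_k>0$. Suppose that $p^{\rm opt}(y)=z_w\big\{\sum_{j=1}^k w_j q_j(y)^\gamma\big\}^{1/\gamma}$, with $z_w>0$ the constant making $\int p^{\rm opt}\mathrm d\Lambda=1$, is well defined, and let $P^{\rm opt}$ be the probability measure with density $p^{\rm opt}$. Define, for probability measures $P$ mutually absolutely continuous with $\Lambda$ (with all integrals below finite), $$A(P)=\sum_{j=1}^k w_j D^*_\gamma(P,Q_j;\Lambda),\qquad D^*_\gamma(P,Q;\Lambda)=-\frac1\gamma\frac{\int p\,q^\gamma\,\mathrm d\Lambda}{\big(\int p^{\gamma+1}\mathrm d\Lambda\big)^{1/(\gamma+1)}}+\frac1\gamma\Big(\int q^{\gamma+1}\mathrm d\Lambda\Big)^{\gamma/(\gamma+1)},$$ where $p=\mathrm dP/\mathrm d\Lambda$, $q=\mathrm dQ/\mathrm d\Lambda$. Then $P^{\rm opt}$ is the unique minimizer of $A$: $A(P)\ge A(P^{\rm opt})$ for all such $P$, with equality if and only if $P=P^{\rm opt}$.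
   Context: $D^*_\gamma$ is called the dual $\gamma$-divergence. All measures considered are probability measures on $\mathcal Y$ mutually absolutely continuous with $\Lambda$, and all integrals appearing are assumed finite. *)

From HB Require Import structures.
From mathcomp Require Import all_boot all_order all_algebra.
From mathcomp Require Import all_classical all_reals all_analysis.
Set Implicit Arguments. Unset Strict Implicit. Unset Printing Implicit Defensive.
Import Order.TTheory GRing.Theory Num.Theory.
Local Open Scope classical_set_scope.
Local Open Scope ring_scope.

(* The sample space Y is modelled as R with its Borel sigma-algebra. *)

Definition is_density (R : realType) (Lam : {measure set R -> \bar R})
  (P : set R -> \bar R) (p : R -> R) : Prop :=
  [/\ measurable_fun setT p, (forall x, 0 <= p x) &
      forall A, measurable A -> P A = (\int[Lam]_(x in A) (p x)%:E)%E].

Definition mutually_ac (R : realType) (Lam : {measure set R -> \bar R})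
  (P : {measure set R -> \bar R}) : Prop :=
  P `<< Lam /\ Lam `<< P.

Definition finite_integrals (R : realType) (Lam : {measure set R -> \bar R})
  (g : R) (p q : R -> R) : Prop :=
  [/\ Lam.-integrable setT (fun x => (p x * q x `^ g)%:E),
      Lam.-integrable setT (fun x => (p x `^ (g + 1))%:E) &
      Lam.-integrable setT (fun x => (q x `^ (g + 1))%:E)].

Definition dual_gamma_div (R : realType) (Lam : {measure set R -> \bar R})
  (g : R) (p q : R -> R) : R :=
  - g^-1 * Rintegral Lam setT (fun x => p x * q x `^ g)
      / (Rintegral Lam setT (fun x => p x `^ (g + 1))) `^ (g + 1)^-1
  + g^-1 * (Rintegral Lam setT (fun x => q x `^ (g + 1))) `^ (g / (g + 1)).

Definition objA (R : realType) (Lam : {measure set R -> \bar R}) (g : R)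
  (k : nat) (w : 'I_k -> R) (q : 'I_k -> R -> R) (p : R -> R) : R :=
  \sum_(j < k) w j * dual_gamma_div Lam g p (q j).

Definition popt_unnorm (R : realType) (g : R) (k : nat) (w : 'I_k -> R)
  (q : 'I_k -> R -> R) (x : R) : R :=
  (\sum_(j < k) w j * q j x `^ g) `^ g^-1.

Definition popt (R : realType) (Lam : {measure set R -> \bar R}) (g : R)
  (k : nat) (w : 'I_k -> R) (q : 'I_k -> R -> R) (x : R) : R :=
  (Rintegral Lam setT (popt_unnorm g w q))^-1 * popt_unnorm g w q x.

From HB Require Import structures.
From mathcomp Require Import all_boot all_order all_algebra.
From mathcomp Require Import all_classical all_reals all_analysis.
From mathcomp Require Import measurable_realfun ring lra.
Import Order.TTheory GRing.Theory Num.Theory.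
Local Open Scope classical_set_scope.
Local Open Scope ring_scope.

(* Write u = {sum_j w_j q_j^g}^(1/g), so that p^opt = u / int u.  Since
   u^g = sum_j w_j q_j^g, the objective is A(p) = - g^-1 * R(p) + const with
   R(p) = int p u^g / (int p^(g+1))^(1/(g+1)), a ratio that is invariant under
   scaling of p.  Hoelder's inequality with exponent g + 1 (g > 0), or its
   reverse forms (-1 < g < 0 and g < -1), says that R(p) is at most (resp. at
   least) R(u), with equality only if p is proportional to u almost everywhere;
   normalisation then forces p = p^opt.  Hoelder's inequality and its equality
   case are obtained by integrating the weighted AM-GM inequality, i.e. the
   strict convexity of exp, written in logarithmic form so that the three
   ranges of g are three instances of the same statement. *)

Section expR_convexity.
Context {R : realType}.
Implicit Types c x s t th : R.

Lemma expR_ge_tangent c x : expR c * (1 + (x - c)) <= expR x.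
Proof.
have -> : expR x = expR c * expR (x - c) by rewrite -expRD subrKC.
by rewrite ler_pM2l ?expR_gt0 ?expR_ge1Dx.
Qed.

Lemma expR_gt_tangent c x : x != c -> expR c * (1 + (x - c)) < expR x.
Proof.
have -> : expR x = expR c * expR (x - c) by rewrite -expRD subrKC.
move=> xc; rewrite ltr_pM2l ?expR_gt0 //.
by rewrite expR_gt1Dx // subr_eq0.
Qed.

Lemma expR_conv_le {th s t} : 0 <= th <= 1 ->
  expR (th * s + (1 - th) * t) <= th * expR s + (1 - th) * expR t.
Proof.
case/andP=> th0 th1; set c := th * s + (1 - th) * t.
have <- : th * (expR c * (1 + (s - c))) + (1 - th) * (expR c * (1 + (t - c)))
    = expR c by rewrite /c; ring.
by apply: lerD; apply: ler_wpM2l; rewrite ?subr_ge0 ?expR_ge_tangent.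
Qed.

Lemma expR_conv_lt {th s t} : 0 < th < 1 -> s != t ->
  expR (th * s + (1 - th) * t) < th * expR s + (1 - th) * expR t.
Proof.
case/andP=> th0 th1 st; set c := th * s + (1 - th) * t.
have sc : s != c.
  rewrite /c -subr_eq0 (_ : _ - _ = (1 - th) * (s - t)); last by ring.
  by rewrite mulf_neq0 // ?subr_eq0 // gt_eqF.
have <- : th * (expR c * (1 + (s - c))) + (1 - th) * (expR c * (1 + (t - c)))
    = expR c by rewrite /c; ring.
apply: ltr_leD; first by rewrite ltr_pM2l // expR_gt_tangent.
by apply: ler_wpM2l; [rewrite subr_ge0 ltW|exact: expR_ge_tangent].
Qed.

End expR_convexity.

Section Rintegral_ae.
Context {d} {T : measurableType d} {R : realType} (mu : {measure set T -> \bar R}).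
Local Notation integrable f := (mu.-integrable setT (EFin \o f)).
Implicit Types f g : T -> R.

Lemma integrableZl_EFin (k : R) f : integrable f -> integrable (fun x => k * f x).
Proof.
move=> /(integrableZl measurableT k).
by apply: (eq_integrable measurableT) => x _ /=; rewrite EFinM.
Qed.

Lemma integrableD_EFin f g : integrable f -> integrable g ->
  integrable (fun x => f x + g x).
Proof.
move=> fi gi; have := integrableD measurableT fi gi.
by apply: (eq_integrable measurableT) => x _ /=; rewrite EFinD.
Qed.

Lemma integrableB_EFin f g : integrable f -> integrable g ->
  integrable (fun x => f x - g x).
Proof.
move=> fi gi; have := integrableB measurableT fi gi.
by apply: (eq_integrable measurableT) => x _ /=; rewrite EFinB.
Qed.

Lemma integrable_sum_EFin {I : Type} (s : seq I) (F : I -> T -> R) :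
  (forall i, integrable (F i)) -> integrable (fun x => \sum_(i <- s) F i x).
Proof.
move=> iF; have := integrable_sum measurableT s (P := xpredT) (fun i _ => iF i).
by apply: (eq_integrable measurableT) => x _ /=; rewrite -sumEFin.
Qed.

Lemma Rintegral_sum {I : Type} (s : seq I) (F : I -> T -> R) :
  (forall i, integrable (F i)) ->
  \int[mu]_x (\sum_(i <- s) F i x) = \sum_(i <- s) \int[mu]_x F i x.
Proof.
move=> iF; elim: s => [|i s IH].
  by under eq_Rintegral do rewrite big_nil; rewrite big_nil Rintegral_cst // mul0r.
under eq_Rintegral do rewrite big_cons.
by rewrite big_cons RintegralD // ?IH //; exact: integrable_sum_EFin.
Qed.

Lemma measurable_int_EFin f : integrable f -> measurable_fun setT f.
Proof. by move=> /measurable_int /measurable_EFinP. Qed.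

Lemma ae_eq_Rintegral f g : measurable_fun setT f -> measurable_fun setT g ->
  (\forall x \ae mu, f x = g x) -> \int[mu]_x f x = \int[mu]_x g x.
Proof.
move=> mf mg fg; rewrite /Rintegral (ae_eq_integral (EFin \o g)) //.
- exact/measurable_EFinP.
- exact/measurable_EFinP.
- by apply: filterS fg => x /= -> _.
Qed.

Lemma ae_ge0_integral_abs f : integrable f -> (\forall x \ae mu, 0 <= f x) ->
  (\int[mu]_x (f x)%:E = \int[mu]_x `|(f x)%:E|)%E.
Proof.
move=> /measurable_int mf f0; apply: ae_eq_integral => //.
- exact: measurableT_comp.
- by apply: filterS f0 => x fx _; rewrite gee0_abs // lee_fin.
Qed.

Lemma Rintegral_ae_ge0 f : integrable f -> (\forall x \ae mu, 0 <= f x) ->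
  0 <= \int[mu]_x f x.
Proof.
by move=> fi f0; rewrite /Rintegral ae_ge0_integral_abs // fine_ge0 // integral_ge0.
Qed.

Lemma Rintegral_ae_eq0 f : integrable f -> (\forall x \ae mu, 0 <= f x) ->
  \int[mu]_x f x = 0 -> \forall x \ae mu, f x = 0.
Proof.
move=> fi f0; rewrite /Rintegral ae_ge0_integral_abs // => /eqP.
rewrite fine_eq0; last by rewrite ge0_fin_numE ?integral_ge0 //; case/integrableP: fi.
move=> /eqP /(ae_eq_integral_abs mu measurableT (measurable_int _ fi)).
by apply: filterS => x /(_ I) [].
Qed.

Lemma Rintegral_ae_gt0 f : mu setT != 0%E -> integrable f ->
  (\forall x \ae mu, 0 < f x) -> 0 < \int[mu]_x f x.
Proof.
move=> mu0 fi f0; have f0' : \forall x \ae mu, 0 <= f x by apply: filterS f0 => x /ltW.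
rewrite lt_def Rintegral_ae_ge0 // andbT; apply: contra mu0 => /eqP /Rintegral_ae_eq0.
move=> /(_ fi f0') fz; have : \forall x \ae mu, False.
  by apply: filterS2 f0 fz => x /[swap] ->; rewrite ltxx.
case=> N [mN N0 sN]; rewrite -measure_le0 -N0 le_measure ?inE //.
by move=> x _; exact: sN.
Qed.

End Rintegral_ae.

Section holder.
Context {d} {T : measurableType d} {R : realType} (mu : {measure set T -> \bar R}).
Local Notation integrable f := (mu.-integrable setT (EFin \o f)).
Variables (a b : R) (f h m : T -> R).
Hypotheses (a_gt0 : 0 < a) (b_gt0 : 0 < b) (mu_neq0 : mu setT != 0%E).
Hypotheses (fi : integrable f) (hi : integrable h) (mi : integrable m).
(* [m = f `^ (a / (a + b)) * h `^ (b / (a + b))], stated through logarithms so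
   that its instances below are ring identities in [ln p] and [ln u]. *)
Hypothesis fhm : \forall x \ae mu, [/\ 0 < f x, 0 < h x, 0 < m x &
  (a + b) * ln (m x) = a * ln (f x) + b * ln (h x)].

Local Notation F := (\int[mu]_x f x).
Local Notation H := (\int[mu]_x h x).
Local Notation M := (\int[mu]_x m x).

Let F_gt0 : 0 < F.
Proof. by apply: Rintegral_ae_gt0 => //; apply: filterS fhm => x []. Qed.

Let H_gt0 : 0 < H.
Proof. by apply: Rintegral_ae_gt0 => //; apply: filterS fhm => x []. Qed.

Let M_gt0 : 0 < M.
Proof. by apply: Rintegral_ae_gt0 => //; apply: filterS fhm => x []. Qed.

Let th := a / (a + b).

Let th_itv : 0 < th < 1.
Proof.
by rewrite divr_gt0 ?addr_gt0 //= ltr_pdivrMr ?addr_gt0 // mul1r ltrDl.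
Qed.

Let K := expR (th * ln F + (1 - th) * ln H).

(* [0 <= gap x] is the weighted AM-GM inequality for [f x / F] and [h x / H];
   Hoelder's inequality is [0 <= \int gap]. *)
Let gap x := th / F * f x + (1 - th) / H * h x - K^-1 * m x.

Let ab_neq0 : a + b != 0. Proof. by rewrite lt0r_neq0 ?addr_gt0. Qed.

Let mul_th_combination u v : (a + b) * (th * u + (1 - th) * v) = a * u + b * v.
Proof. by rewrite /th; field. Qed.

Let th_combination {l u v : R} : (a + b) * l = a * u + b * v ->
  l = th * u + (1 - th) * v.
Proof. by move=> e; apply: (mulfI ab_neq0); rewrite e mul_th_combination. Qed.

Let s x := ln (f x) - ln F.
Let t x := ln (h x) - ln H.

Let gapE : \forall x \ae mu,
  gap x = th * expR (s x) + (1 - th) * expR (t x) - expR (th * s x + (1 - th) * t x).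
Proof.
apply: filterS fhm => x [fx hx mx fhmx].
have -> : th * s x + (1 - th) * t x = ln (m x) - ln K.
  by rewrite /s /t (th_combination fhmx) /K expRK; ring.
by rewrite /gap !expRB !lnK ?posrE ?expR_gt0 //; ring.
Qed.

Let gap_ge0 : \forall x \ae mu, 0 <= gap x.
Proof.
apply: filterS gapE => x ->; rewrite subr_ge0 expR_conv_le //.
by case/andP: th_itv => /ltW -> /ltW ->.
Qed.

Let gapi : integrable gap.
Proof.
by rewrite /gap; apply: integrableB_EFin; [apply: integrableD_EFin|]; apply: integrableZl_EFin.
Qed.

Let Rintegral_gap : \int[mu]_x gap x = 1 - M / K.
Proof.
rewrite /gap RintegralB ?RintegralD ?RintegralZl //.
- by rewrite !divfK ?gt_eqF // subrKC mulrC.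
all: by [apply: integrableZl_EFin | apply: integrableD_EFin; apply: integrableZl_EFin].
Qed.

Lemma holder_ln : (a + b) * ln M <= a * ln F + b * ln H.
Proof.
rewrite -mul_th_combination ler_pM2l ?addr_gt0 // -[X in _ <= X]expRK.
rewrite ler_ln ?posrE ?expR_gt0 //.
have : 0 <= 1 - M / K by rewrite -Rintegral_gap; exact: Rintegral_ae_ge0 gapi gap_ge0.
by rewrite subr_ge0 ler_pdivrMr ?expR_gt0 // mul1r.
Qed.

Lemma holder_ln_eq : (a + b) * ln M = a * ln F + b * ln H ->
  \forall x \ae mu, ln (f x) - ln (h x) = ln F - ln H.
Proof.
move=> /th_combination; rewrite -[RHS]expRK => /ln_inj MK.
have {}MK : M = K by apply: MK; rewrite posrE ?expR_gt0.
have /Rintegral_ae_eq0 : \int[mu]_x gap x = 0.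
  by rewrite Rintegral_gap -MK divff ?gt_eqF // subrr.
move=> /(_ gapi gap_ge0) gap0; apply: filterS2 gapE gap0 => x -> gx0.
have [st|st] := eqVneq (s x) (t x); first by move: st; rewrite /s /t; lra.
by have := expR_conv_lt th_itv st; rewrite -subr_gt0 gx0 ltxx.
Qed.

End holder.
Arguments holder_ln {d T R mu a b f h m}.
Arguments holder_ln_eq {d T R mu a b f h m}.

Definition holder_ratio {d} {T : measurableType d} {R : realType}
    (mu : {measure set T -> \bar R}) (g : R) (u p : T -> R) : R :=
  \int[mu]_x (p x * u x `^ g) / (\int[mu]_x p x `^ (g + 1)) `^ (g + 1)^-1.

Section holder_ratio_invariance.
Context {d} {T : measurableType d} {R : realType} (mu : {measure set T -> \bar R}).
Local Notation integrable f := (mu.-integrable setT (EFin \o f)).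
Variables (g : R) (u : T -> R).

Lemma holder_ratioZ (c : R) (f : T -> R) : g != -1 -> 0 < c -> (forall x, 0 <= f x) ->
  integrable (fun x => f x * u x `^ g) -> integrable (fun x => f x `^ (g + 1)) ->
  holder_ratio mu g u (fun x => c * f x) = holder_ratio mu g u f.
Proof.
move=> g_neqN1 c_gt0 f_ge0 fui fi; have g1_neq0 : g + 1 != 0 by rewrite addr_eq0.
rewrite /holder_ratio.
under eq_Rintegral do rewrite -mulrA.
under [X in _ / X `^ _]eq_Rintegral do rewrite (powRM _ (ltW c_gt0) (f_ge0 _)).
have : 0 <= \int[mu]_x f x `^ (g + 1) by apply: Rintegral_ge0 => x _; exact: powR_ge0.
rewrite !RintegralZl //.
generalize (\int[mu]_x f x `^ (g + 1)) (\int[mu]_x (f x * u x `^ g)) => F M F_ge0.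
rewrite powRM ?powR_ge0 // -powRrM mulfV // powRr1 ?(ltW c_gt0) //.
by rewrite -mulf_div divff ?gt_eqF // mul1r.
Qed.

Lemma ae_eq_holder_ratio (f1 f2 : T -> R) : measurable_fun setT u ->
  measurable_fun setT f1 -> measurable_fun setT f2 ->
  (\forall x \ae mu, f1 x = f2 x) -> holder_ratio mu g u f1 = holder_ratio mu g u f2.
Proof.
move=> mu_ mf1 mf2 f12; have mug := measurableT_comp (measurable_powR g) mu_.
rewrite /holder_ratio; congr (_ / _ `^ _); apply: ae_eq_Rintegral.
- exact: measurable_funM mf1 mug.
- exact: measurable_funM mf2 mug.
- by apply: filterS f12 => x /= ->.
- exact: measurableT_comp (measurable_powR _) mf1.
- exact: measurableT_comp (measurable_powR _) mf2.
- by apply: filterS f12 => x /= ->.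
Qed.

End holder_ratio_invariance.
Arguments ae_eq_holder_ratio {d T R mu g u f1 f2}.

Section holder_ratio.
Context {d} {T : measurableType d} {R : realType} (mu : {measure set T -> \bar R}).
Local Notation integrable f := (mu.-integrable setT (EFin \o f)).
Variables (g : R) (u p : T -> R).
Hypotheses (g_neq0 : g != 0) (g_neqN1 : g != -1) (mu_neq0 : mu setT != 0%E).
Hypothesis u_ge0 : forall x, 0 <= u x.
Hypotheses (p_gt0 : \forall x \ae mu, 0 < p x) (u_gt0 : \forall x \ae mu, 0 < u x).
Hypotheses (pi : integrable (fun x => p x `^ (g + 1)))
  (ui : integrable (fun x => u x `^ (g + 1)))
  (pui : integrable (fun x => p x * u x `^ g)).

Local Notation M := (\int[mu]_x (p x * u x `^ g)).
Local Notation P := (\int[mu]_x p x `^ (g + 1)).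
Local Notation U := (\int[mu]_x u x `^ (g + 1)).

Let ln_pu : \forall x \ae mu,
  [/\ 0 < p x * u x `^ g, 0 < p x `^ (g + 1), 0 < u x `^ (g + 1) &
      ln (p x * u x `^ g) = ln (p x) + g * ln (u x)].
Proof.
apply: filterS2 p_gt0 u_gt0 => x px ux.
have ugx : 0 < u x `^ g by exact: powR_gt0.
by split; rewrite ?mulr_gt0 ?powR_gt0 // lnM ?posrE // ln_powR.
Qed.

Let M_gt0 : 0 < M.
Proof. by apply: Rintegral_ae_gt0 => //; apply: filterS ln_pu => x []. Qed.

Let P_gt0 : 0 < P.
Proof. by apply: Rintegral_ae_gt0 => //; apply: filterS ln_pu => x []. Qed.

Let U_gt0 : 0 < U.
Proof. by apply: Rintegral_ae_gt0 => //; apply: filterS ln_pu => x []. Qed.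

Let ae_proportional k c : k != 0 ->
  (\forall x \ae mu, k * (ln (p x) - ln (u x)) = c) ->
  exists l, \forall x \ae mu, p x = l * u x.
Proof.
move=> k0 e; exists (expR (c / k)); apply: filterS3 p_gt0 u_gt0 e => x px ux <-.
by rewrite [k * _ / k]mulrC mulKf // expRB !lnK ?posrE // divfK ?gt_eqF.
Qed.

(* [defect / (g + 1) = ln (holder_ratio p) - ln (holder_ratio u)]
   ([ln_ratio_sub]); each range of [g] bounds its sign by Hoelder's inequality
   for a different triple of functions. *)
Let defect := (g + 1) * ln M - ln P - g * ln U.

Let defect_pos : 0 < g ->
  defect <= 0 /\ (defect = 0 -> exists l, \forall x \ae mu, p x = l * u x).
Proof.
move=> g_gt0; have rel : \forall x \ae mu, [/\ 0 < p x `^ (g + 1), 0 < u x `^ (g + 1),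
    0 < p x * u x `^ g & (1 + g) * ln (p x * u x `^ g) =
    1 * ln (p x `^ (g + 1)) + g * ln (u x `^ (g + 1))].
  by apply: filterS ln_pu => x [? ? ? ->]; split => //; rewrite !ln_powR; ring.
have -> : defect = (1 + g) * ln M - (1 * ln P + g * ln U).
  by rewrite /defect; generalize (ln M) (ln P) (ln U) => lM lP lU; ring.
rewrite subr_le0; split; first exact: holder_ln ltr01 g_gt0 mu_neq0 pi ui pui rel.
move=> /subr0_eq /(holder_ln_eq ltr01 g_gt0 mu_neq0 pi ui pui rel) e.
apply: (ae_proportional (g + 1) (ln P - ln U)); first by rewrite addr_eq0.
by apply: filterS e => x; rewrite !ln_powR -mulrBr.
Qed.

Let defect_mid : -1 < g < 0 ->
  0 <= defect /\ (defect = 0 -> exists l, \forall x \ae mu, p x = l * u x).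
Proof.
case/andP=> gN1 g_lt0; have g1_gt0 : 0 < g + 1 by rewrite -ltrBlDr sub0r.
have rel : \forall x \ae mu, [/\ 0 < p x * u x `^ g, 0 < u x `^ (g + 1),
    0 < p x `^ (g + 1) & (g + 1 + - g) * ln (p x `^ (g + 1)) =
    (g + 1) * ln (p x * u x `^ g) + - g * ln (u x `^ (g + 1))].
  by apply: filterS ln_pu => x [? ? ? ->]; split => //; rewrite !ln_powR; ring.
have Ng_gt0 : 0 < - g by rewrite oppr_gt0.
have -> : defect = ((g + 1) * ln M + - g * ln U) - (g + 1 + - g) * ln P.
  by rewrite /defect; generalize (ln M) (ln P) (ln U) => lM lP lU; ring.
rewrite subr_ge0; split; first exact: holder_ln g1_gt0 Ng_gt0 mu_neq0 pui ui pi rel.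
move=> /subr0_eq /esym /(holder_ln_eq g1_gt0 Ng_gt0 mu_neq0 pui ui pi rel) e.
apply: (ae_proportional 1 (ln M - ln U)) => //; apply: filterS2 e ln_pu => x /= ex [_ _ _ lnE].
by rewrite mul1r -ex lnE ln_powR; ring.
Qed.

Let defect_neg : g < -1 ->
  defect <= 0 /\ (defect = 0 -> exists l, \forall x \ae mu, p x = l * u x).
Proof.
move=> gN1; have Ng1_gt0 : 0 < - (g + 1) by rewrite oppr_gt0 -ltrBrDr sub0r.
have rel : \forall x \ae mu, [/\ 0 < p x * u x `^ g, 0 < p x `^ (g + 1),
    0 < u x `^ (g + 1) & (- (g + 1) + 1) * ln (u x `^ (g + 1)) =
    - (g + 1) * ln (p x * u x `^ g) + 1 * ln (p x `^ (g + 1))].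
  by apply: filterS ln_pu => x [? ? ? ->]; split => //; rewrite !ln_powR; ring.
have -> : defect = (- (g + 1) + 1) * ln U - (- (g + 1) * ln M + 1 * ln P).
  by rewrite /defect; generalize (ln M) (ln P) (ln U) => lM lP lU; ring.
rewrite subr_le0; split; first exact: holder_ln Ng1_gt0 ltr01 mu_neq0 pui pi ui rel.
move=> /subr0_eq /(holder_ln_eq Ng1_gt0 ltr01 mu_neq0 pui pi ui rel) e.
apply: (ae_proportional (- g) (ln M - ln P)); first by rewrite oppr_eq0.
apply: filterS2 e ln_pu => x /= ex [_ _ _ lnE].
by rewrite -ex lnE ln_powR; ring.
Qed.

Let g1_neq0 : g + 1 != 0. Proof. by rewrite addr_eq0. Qed.

Lemma holder_ratio_self : holder_ratio mu g u u = U `^ (g / (g + 1)).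
Proof.
rewrite /holder_ratio (eq_Rintegral _ (g := fun x => u x `^ (g + 1))); last first.
  move=> x _; rewrite powRD ?(negPf g1_neq0) //.
  by rewrite powRr1 // mulrC.
rewrite -[X in X / _](powRr1 (ltW U_gt0)) -powRB ?(gt_eqF U_gt0) ?implybT //.
by congr (_ `^ _); field.
Qed.

Let ln_ratio_sub :
  ln (holder_ratio mu g u p) - ln (holder_ratio mu g u u) = defect / (g + 1).
Proof.
rewrite holder_ratio_self /holder_ratio /defect.
move: M_gt0 P_gt0 U_gt0; generalize M P U => M' P' U' M'_gt0 P'_gt0 U'_gt0.
by rewrite ln_div ?posrE ?powR_gt0 // !ln_powR; field.
Qed.

Lemma holder_ratio_cmp : g * (holder_ratio mu g u p - holder_ratio mu g u u) <= 0.
Proof.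
have r_gt0 : 0 < holder_ratio mu g u p := divr_gt0 M_gt0 (powR_gt0 _ P_gt0).
have s_gt0 : 0 < holder_ratio mu g u u by rewrite holder_ratio_self powR_gt0.
move: r_gt0 s_gt0 ln_ratio_sub.
generalize (holder_ratio mu g u p) (holder_ratio mu g u u) => r s r_gt0 s_gt0 lnrs.
case: (ltgtP g 0) => [g_lt0|g_gt0|g0]; last by move: g_neq0; rewrite g0 eqxx.
  rewrite nmulr_rle0 // subr_ge0 -ler_ln ?posrE // -subr_ge0 lnrs.
  case: (ltgtP g (-1)) => [gN1|gN1|gN1]; last by move: g_neqN1; rewrite gN1 eqxx.
    have g1_lt0 : g + 1 < 0 by rewrite -ltrBrDr sub0r.
    by rewrite mulr_le0 ?(defect_neg gN1).1 // invr_le0 (ltW g1_lt0).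
  have g1_gt0 : 0 < g + 1 by rewrite -ltrBlDr sub0r.
  by rewrite divr_ge0 ?(defect_mid _).1 ?gN1 ?(ltW g1_gt0).
rewrite pmulr_rle0 // subr_le0 -ler_ln ?posrE // -subr_le0 lnrs.
by rewrite mulr_le0_ge0 ?(defect_pos g_gt0).1 // invr_ge0 addr_ge0 ?ltW.
Qed.

Lemma holder_ratio_eq : holder_ratio mu g u p = holder_ratio mu g u u ->
  exists l, \forall x \ae mu, p x = l * u x.
Proof.
move=> e; have /eqP : defect / (g + 1) = 0 by rewrite -ln_ratio_sub e subrr.
rewrite mulf_eq0 invr_eq0 (negPf g1_neq0) orbF => /eqP D0.
case: (ltgtP g 0) => [g_lt0|g_gt0|g0]; last by move: g_neq0; rewrite g0 eqxx.
  case: (ltgtP g (-1)) => [gN1|gN1|gN1]; last by move: g_neqN1; rewrite gN1 eqxx.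
    exact: (defect_neg gN1).2.
  by apply: (defect_mid _).2; rewrite ?gN1.
exact: (defect_pos g_gt0).2.
Qed.

End holder_ratio.
Arguments holder_ratio_cmp {d T R mu g u p}.
Arguments holder_ratio_eq {d T R mu g u p}.

Section density.
Context {R : realType} {Lam : {measure set R -> \bar R}}.

Lemma is_density_integrable {P : probability R R} {p : R -> R} :
  is_density Lam P p -> Lam.-integrable setT (EFin \o p).
Proof.
case=> mp p_ge0 hP; apply/integrableP; split; first exact/measurable_EFinP.
under eq_integral => x _ do rewrite gee0_abs ?lee_fin //.
by rewrite -hP // probability_setT ltey.
Qed.

Lemma is_density_Rintegral {P : probability R R} {p : R -> R} :
  is_density Lam P p -> \int[Lam]_x p x = 1.
Proof. by case=> _ _ hP; rewrite /Rintegral -hP // probability_setT. Qed.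

Lemma is_density_ae_gt0 {P : {measure set R -> \bar R}} {p : R -> R} :
  Lam `<< P -> is_density Lam P p -> \forall x \ae Lam, 0 < p x.
Proof.
move=> LP [mp p_ge0 hP].
have mN : measurable [set x | p x = 0].
  by have := mp measurableT [set 0] (measurable_set1 0); rewrite setTI.
have PN : P [set x | p x = 0] = 0.
  by rewrite hP //; under eq_integral => x /[!inE] -> do []; exact: integral0.
exists [set x | p x = 0]; split; first by [].
  exact: (null_content_dominatesP _ _).1 LP _ mN PN.
by move=> x /= /negP; rewrite lt_def p_ge0 andbT negbK => /eqP.
Qed.

Lemma is_density_ae_eq {P1 P2 : set R -> \bar R} {p1 p2 : R -> R} :
  is_density Lam P1 p1 -> is_density Lam P2 p2 ->
  (\forall x \ae Lam, p1 x = p2 x) -> forall A, measurable A -> P1 A = P2 A.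
Proof.
move=> [mp1 _ hP1] [mp2 _ hP2] p12 A mA; rewrite hP1 // hP2 //.
apply: ae_eq_integral => //; try exact/measurable_funTS/measurable_EFinP.
by apply: filterS p12 => x /= -> _.
Qed.

Lemma ae_eq_is_density {P1 P2 : set R -> \bar R} {p1 p2 : R -> R} :
  Lam.-integrable setT (EFin \o p1) -> is_density Lam P1 p1 -> is_density Lam P2 p2 ->
  (forall A, measurable A -> P1 A = P2 A) -> \forall x \ae Lam, p1 x = p2 x.
Proof.
move=> p1i [_ _ hP1] [mp2 _ hP2] P12.
have := integral_ae_eq measurableT p1i ((measurable_EFinP _ _).2 mp2).
move=> /(_ (fun A _ mA => etrans (esym (hP1 A mA)) (etrans (P12 A mA) (hP2 A mA)))).
by apply: filterS => x /(_ I) [].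
Qed.

End density.

Section objective.
Context {R : realType} {Lam : {measure set R -> \bar R}} {g : R} {k : nat}
  {w : 'I_k -> R} {q : 'I_k -> R -> R}.
Hypotheses (g_neq0 : g != 0) (w_ge0 : forall j, 0 <= w j).
Local Notation u := (popt_unnorm g w q).
Local Notation integrable f := (Lam.-integrable setT (EFin \o f)).

Lemma popt_unnorm_powR x : u x `^ g = \sum_(j < k) w j * q j x `^ g.
Proof.
rewrite /popt_unnorm -powRrM mulVf // powRr1 //.
by apply: sumr_ge0 => j _; rewrite mulr_ge0 ?powR_ge0.
Qed.

Lemma popt_unnorm_gt0 j x : 0 < w j -> 0 < q j x -> 0 < u x.
Proof.
move=> wj qjx; apply: powR_gt0; rewrite (bigD1 j) //=.
apply: ltr_pwDl; first by rewrite mulr_gt0 ?powR_gt0.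
by apply: sumr_ge0 => i _; rewrite mulr_ge0 ?powR_ge0.
Qed.

Section mul_popt_unnorm.
Context {p : R -> R}.
Hypothesis pqi : forall j, integrable (fun x => p x * q j x `^ g).

Let mul_popt_unnormE x : p x * u x `^ g = \sum_(j < k) w j * (p x * q j x `^ g).
Proof. by rewrite popt_unnorm_powR mulr_sumr; apply: eq_bigr => j _; rewrite mulrCA. Qed.

Lemma integrable_mul_popt_unnorm : integrable (fun x => p x * u x `^ g).
Proof.
have := integrable_sum_EFin Lam (index_enum 'I_k) _
  (fun j => integrableZl_EFin Lam (w j) _ (pqi j)).
by apply: (eq_integrable measurableT) => x _ /=; rewrite mul_popt_unnormE.
Qed.

Lemma objAE : objA Lam g w q p = - g^-1 * holder_ratio Lam g u p +
  \sum_(j < k) w j * (g^-1 * (\int[Lam]_x q j x `^ (g + 1)) `^ (g / (g + 1))).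
Proof.
rewrite /objA /holder_ratio (eq_Rintegral _ (in1W mul_popt_unnormE)).
rewrite Rintegral_sum => [|j]; last exact: integrableZl_EFin.
rewrite mulr_suml mulr_sumr -big_split /=; apply: eq_bigr => j _.
rewrite RintegralZl // /dual_gamma_div.
set a := \int[Lam]_x (p x * q j x `^ g).
set b := \int[Lam]_x p x `^ (g + 1).
set c := \int[Lam]_x q j x `^ (g + 1).
by ring.
Qed.

End mul_popt_unnorm.

End objective.

Section optimality.
Context {R : realType} {Lam : {measure set R -> \bar R}} {g : R} {k : nat}
  {Q : 'I_k -> probability R R} {q : 'I_k -> R -> R} {w : 'I_k -> R}.
Hypotheses (g_neq0 : g != 0) (g_neqN1 : g != -1).
Hypotheses (Qac : forall j, mutually_ac Lam (Q j)) (Qd : forall j, is_density Lam (Q j) (q j)).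
Hypothesis w_gt0 : forall j, 0 < w j.
Hypotheses (ui : Lam.-integrable setT (fun x => (popt_unnorm g w q x)%:E))
  (Z_gt0 : 0 < \int[Lam]_x popt_unnorm g w q x).
Context {Popt : probability R R}.
Hypotheses (Poptd : is_density Lam Popt (popt Lam g w q))
  (popt_fin : forall j, finite_integrals Lam g (popt Lam g w q) (q j)).
Context {P : probability R R} {p : R -> R}.
Hypotheses (Pac : mutually_ac Lam P) (Pd : is_density Lam P p)
  (p_fin : forall j, finite_integrals Lam g p (q j)).

Local Notation u := (popt_unnorm g w q).
Local Notation Z := (\int[Lam]_x u x).
Local Notation popt := (popt Lam g w q).
Local Notation integrable f := (Lam.-integrable setT (EFin \o f)).

Let w_ge0 j : 0 <= w j. Proof. exact: ltW. Qed.

Let u_ge0 x : 0 <= u x. Proof. exact: powR_ge0. Qed.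

Let Z_neq0 : Z != 0. Proof. exact: lt0r_neq0. Qed.

Let Lam_neq0 : Lam setT != 0%E.
Proof.
apply/eqP => L0; have := probability_setT P.
rewrite ((null_content_dominatesP _ _).1 Pac.1 _ measurableT L0).
by move=> /(congr1 fine) /esym /eqP; rewrite oner_eq0.
Qed.

Let k_gt0 : (0 < k)%N.
Proof.
rewrite lt0n; apply/eqP => k0; move: Z_gt0.
rewrite (eq_Rintegral _ (g := fun=> 0)) ?Rintegral_cst ?mul0r ?ltxx //.
move=> x _; rewrite /popt_unnorm big1 ?powR0 ?invr_eq0 // => j.
by have := leq_trans (ltn_ord j) (eq_leq k0); rewrite ltn0.
Qed.

Let j0 : 'I_k := Ordinal k_gt0.

Let u_gt0 : \forall x \ae Lam, 0 < u x.
Proof.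
have := is_density_ae_gt0 (Qac j0).2 (Qd j0).
by apply: filterS => x; exact: popt_unnorm_gt0.
Qed.

Let pqi j : integrable (fun x => p x * q j x `^ g). Proof. by case: (p_fin j). Qed.
Let poptqi j : integrable (fun x => popt x * q j x `^ g). Proof. by case: (popt_fin j). Qed.

Let pi : integrable (fun x => p x `^ (g + 1)).
Proof. by case: (p_fin j0). Qed.

Let poptpi : integrable (fun x => popt x `^ (g + 1)).
Proof. by case: (popt_fin j0). Qed.

Let pui : integrable (fun x => p x * u x `^ g).
Proof. exact: integrable_mul_popt_unnorm. Qed.

Let poptui : integrable (fun x => popt x * u x `^ g).
Proof. exact: integrable_mul_popt_unnorm. Qed.

Let uui : integrable (fun x => u x * u x `^ g).
Proof.
have := integrableZl_EFin Lam Z _ poptui.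
by apply: (eq_integrable measurableT) => x _ /=; rewrite /popt mulrA mulVKf.
Qed.

Let ui1 : integrable (fun x => u x `^ (g + 1)).
Proof.
have c_neq0 : Z^-1 `^ (g + 1) != 0 by rewrite gt_eqF ?powR_gt0 ?invr_gt0.
have := integrableZl_EFin Lam (Z^-1 `^ (g + 1))^-1 _ poptpi.
apply: (eq_integrable measurableT) => x _ /=.
by rewrite /popt powRM ?invr_ge0 ?(ltW Z_gt0) // mulKf.
Qed.

Let ratio_popt : holder_ratio Lam g u popt = holder_ratio Lam g u u.
Proof. by apply: holder_ratioZ; rewrite ?invr_gt0. Qed.

Let p_gt0 : \forall x \ae Lam, 0 < p x.
Proof. exact: is_density_ae_gt0 Pac.2 Pd. Qed.

Lemma objA_popt_le : objA Lam g w q popt <= objA Lam g w q p.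
Proof.
rewrite (objAE g_neq0 w_ge0 poptqi) (objAE g_neq0 w_ge0 pqi) lerD2r ratio_popt.
have := holder_ratio_cmp g_neq0 g_neqN1 Lam_neq0 u_ge0 p_gt0 u_gt0 pi ui1 pui.
generalize (holder_ratio Lam g u p) (holder_ratio Lam g u u) => rp ru cmp.
rewrite -subr_ge0 -mulrBr (_ : - g^-1 * (rp - ru) = - (g * (rp - ru)) / g ^+ 2).
  by apply: divr_ge0; [rewrite oppr_ge0 | exact: sqr_ge0].
by field.
Qed.

Lemma objA_eq_ae : objA Lam g w q p = objA Lam g w q popt ->
  \forall x \ae Lam, p x = popt x.
Proof.
have Ng_neq0 : - g^-1 != 0 by rewrite oppr_eq0 invr_eq0.
rewrite (objAE g_neq0 w_ge0 pqi) (objAE g_neq0 w_ge0 poptqi) ratio_popt.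
move=> /addIr /(mulfI Ng_neq0) e.
have [l pl] := holder_ratio_eq g_neq0 g_neqN1 Lam_neq0 u_ge0 p_gt0 u_gt0 pi ui1 pui e.
have lZ : l * Z = 1.
  rewrite -(RintegralZl l measurableT ui) -(is_density_Rintegral Pd).
  apply: ae_eq_Rintegral.
  - exact: measurable_funM (measurable_cst l) (measurable_int_EFin _ _ ui).
  - by case: Pd.
  - by apply: filterS pl => x ->.
apply: filterS pl => x ->; congr (_ * _).
by apply: (mulIf Z_neq0); rewrite mulVf.
Qed.

Lemma ae_eq_objA : (\forall x \ae Lam, p x = popt x) ->
  objA Lam g w q p = objA Lam g w q popt.
Proof.
move=> ppopt; have [mp _ _] := Pd; have [mpopt _ _] := Poptd.
rewrite (objAE g_neq0 w_ge0 pqi) (objAE g_neq0 w_ge0 poptqi).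
by rewrite (ae_eq_holder_ratio (measurable_int_EFin _ _ ui) mp mpopt ppopt).
Qed.

End optimality.

Theorem mainTheorem2 (R : realType) (Lam : {sigma_finite_measure set R -> \bar R})
  (g : R) (k : nat) (Q : 'I_k -> probability R R) (q : 'I_k -> R -> R)
  (w : 'I_k -> R) :
  g != 0 -> g != -1 ->
  (forall j, mutually_ac Lam (Q j)) ->
  (forall j, is_density Lam (Q j) (q j)) ->
  (forall j, 0 < w j) ->
  (* p^opt is well defined: the normalizing integral is finite and positive *)
  Lam.-integrable setT (fun x => (popt_unnorm g w q x)%:E) ->
  0 < Rintegral Lam setT (popt_unnorm g w q) ->
  forall Popt : probability R R,
  is_density Lam Popt (popt Lam g w q) ->
  (forall j, finite_integrals Lam g (popt Lam g w q) (q j)) ->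
  forall (P : probability R R) (p : R -> R),
  mutually_ac Lam P -> is_density Lam P p ->
  (forall j, finite_integrals Lam g p (q j)) ->
  objA Lam g w q (popt Lam g w q) <= objA Lam g w q p /\
  (objA Lam g w q p = objA Lam g w q (popt Lam g w q) <->
     forall A, measurable A -> P A = Popt A).
Proof.
move=> g_neq0 g_neqN1 Qac Qd w_gt0 ui Z_gt0 Popt Poptd popt_fin P p Pac Pd p_fin.
split; first exact: (objA_popt_le g_neq0 g_neqN1 Qac Qd w_gt0 Z_gt0 popt_fin Pac Pd p_fin).
split => [/(objA_eq_ae g_neq0 g_neqN1 Qac Qd w_gt0 ui Z_gt0 popt_fin Pac Pd p_fin)|PPopt].
  exact: is_density_ae_eq Pd Poptd.
apply: (ae_eq_objA g_neq0 w_gt0 ui Poptd popt_fin Pd p_fin).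
exact: ae_eq_is_density (is_density_integrable Pd) Pd Poptd PPopt.
Qed.
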